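(* Let $s,m$ be positive integers, $n=sm$, and let $k\geq 2$ be an integer. Let $F\in\mathbb{F}_{2^s}[x]$ be a polynomial which, viewed as a function $\mathbb{F}_{2^n}\to\mathbb{F}_{2^n}$, is differentially $(1,2k)$-uniform, i.e. $\delta_{F,1}=2k$. Suppose that $m$ is not divisible by any integer $t$ with $2\leq t\leq k$. Then for all $a,b\in\mathbb{F}_{2^s}$ with $a\neq 0$, the equation $F(x+a)+F(x)=b$ has no solution $x\in\mathbb{F}_{2^n}\setminus\mathbb{F}_{2^s}$.
   Context: For a function $F:\mathbb{F}_{p^n}\to\mathbb{F}_{p^n}$ and $c\in\mathbb{F}_{p^n}$, let ${}_c\Delta_F(a,b)=\#\{x\in\mathbb{F}_{p^n}: F(x+a)-cF(x)=b\}$, and the $c$-differential uniformity of $F$ is $\delta_{F,c}=\max\{{}_c\Delta_F(a,b): a,b\in\mathbb{F}_{p^n},\ a\neq 0 \text{ if } c=1\}$. $F$ is called differentially $(c,\delta)$-uniform if $\delta_{F,c}=\delta$. *)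

From HB Require Import structures.
From mathcomp Require Import all_boot all_order all_algebra all_field.
Set Implicit Arguments. Unset Strict Implicit. Unset Printing Implicit Defensive.
Import GRing.Theory.
Local Open Scope ring_scope.

Definition cDelta (L : finFieldType) (F : L -> L) (c a b : L) : nat :=
  #|[set x : L | F (x + a) - c * F x == b]|.

Definition cdiff_unif (L : finFieldType) (F : L -> L) (c : L) : nat :=
  \max_(ab : L * L | (c != 1) || (ab.1 != 0)) cDelta F c ab.1 ab.2.

(* The subfield F_{2^s} of a finite field L of order 2^n (s | n):
   the set of fixed points of x |-> x^(2^s). *)
Definition subF (L : finFieldType) (s : nat) : {set L} :=
  [set x : L | x ^+ (2 ^ s) == x].

From HB Require Import structures.
From mathcomp Require Import all_boot all_order all_algebra all_field.
Import GRing.Theory.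
Local Open Scope ring_scope.

(* The Frobenius power y |-> y^(2^s) fixes the coefficients of F, a and b, and
   commutes with y |-> y + a, so the solution set of F(y + a) + F(y) = b is
   stable under both maps. The Frobenius orbit of a solution x outside F_(2^s)
   has length d > 1 dividing m, hence d > k and d is odd. For odd d the
   involution y |-> y + a cannot map x into its own orbit (it would have to
   be the half-turn of the cycle), so the orbits of x and x + a are disjoint
   and give 2d > 2k solutions, contradicting delta_F = 2k. *)

Section CommutingOrbits.
Context {T : finType} {f : T -> T}.
Hypothesis f_inj : injective f.

Lemma order_dvdn_iter x n : (order f x %| n)%N = (iter n f x == x).
Proof.
have iter_order_mul q : iter (q * order f x) f x = x.
  by elim: q => // q IHq; rewrite mulSn iterD IHq iter_order.
apply/idP/eqP => [/dvdnP[q ->] // | fnx].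
have iter_mod : iter (n %% order f x) f x = x.
  by rewrite -[RHS]fnx {2}(divn_eq n (order f x)) addnC iterD iter_order_mul.
by rewrite /dvdn -(findex_iter (ltn_pmod n (order_gt0 f x))) iter_mod findex0.
Qed.

Lemma iter_morph (g : T -> T) n : {morph g : y / f y} -> {morph g : y / iter n f y}.
Proof. by move=> gf; elim: n => //= n IHn y; rewrite gf IHn. Qed.

Lemma fconnect_morph (g : T -> T) x y :
  {morph g : z / f z} -> fconnect f x y -> fconnect f (g x) (g y).
Proof. by move=> gf /iter_findex <-; rewrite (iter_morph _ _ gf) fconnect_iter. Qed.

Lemma fconnect_involution_odd_order (g : T -> T) x :
  {morph g : y / f y} -> involutive g -> odd (order f x) ->
  fconnect f x (g x) -> g x = x.
Proof.
move=> gf gK odd_x /iter_findex; set j := findex f x (g x) => gx.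
have : iter (j * 2) f x = x by rewrite muln2 -addnn iterD gx -(iter_morph _ _ gf) gx gK.
by move/eqP; rewrite -order_dvdn_iter Gauss_dvdl ?coprimen2 // order_dvdn_iter gx => /eqP.
Qed.

Lemma double_order_le_card (g : T -> T) (S : {set T}) x :
  {morph g : y / f y} -> injective g ->
  {homo f : y / y \in S} -> {homo g : y / y \in S} ->
  x \in S -> ~~ fconnect f x (g x) -> (2 * order f x <= #|S|)%N.
Proof.
move=> gf g_inj fS gS xS not_xgx.
pose O := [set y | fconnect f x y].
have card_O : #|O| = order f x by rewrite cardsE.
have O_S : O \subset S.
  by apply/subsetP => y; rewrite inE => /iter_findex <-; apply: iter_in.
have gO_S : g @: O \subset S.
  by apply/subsetP => _ /imsetP[y yO ->]; apply/gS/(subsetP O_S).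
have disj_O : [disjoint O & g @: O].
  apply/pred0P => z /=; apply/negP => /andP[]; rewrite inE => xz.
  case/imsetP => y; rewrite inE => xy z_gy; apply/negP: not_xgx.
  by rewrite (connect_trans xz) // fconnect_sym // z_gy fconnect_morph.
rewrite mul2n -addnn -card_O -{2}(card_imset O g_inj).
move: disj_O; rewrite -(leq_card_setU O (g @: O)).2 => /eqP <-.
by apply: subset_leq_card; rewrite subUset O_S gO_S.
Qed.
End CommutingOrbits.

Lemma cDelta_le_cdiff_unif (L : finFieldType) (F : L -> L) (c a b : L) :
  (c != 1) || (a != 0) -> (cDelta F c a b <= cdiff_unif F c)%N.
Proof. exact: (@leq_bigmax_cond _ _ (fun ab => cDelta F c ab.1 ab.2) (a, b)). Qed.
Arguments cDelta_le_cdiff_unif {L F c a b}.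

Section BinaryFrobenius.
Context {L : finFieldType} {s : nat}.
Hypothesis pchar2_L : 2%N \in [pchar L].

Local Notation frob := (fun y : L => y ^+ (2 ^ s)).

Lemma frobD : {morph frob : y z / y + z}.
Proof.
by move=> y z; rewrite /= exprDn_pchar // pnatX (pnatE _ (isT : prime 2)) pchar2_L.
Qed.

Lemma frob_inj : injective frob.
Proof.
move=> y z /= yz; have : (y + z) ^+ (2 ^ s) == 0 by rewrite frobD yz addrr_pchar2.
by rewrite expf_eq0 expn_gt0 /= addr_eq0 oppr_pchar2 // => /eqP.
Qed.

Lemma iter_frob i y : iter i frob y = y ^+ (2 ^ (s * i)).
Proof.
elim: i => [|i IHi]; first by rewrite muln0 expr1.
by rewrite iterS IHi -exprM -expnD mulnS addnC.
Qed.

Lemma order_frob_dvdn m x : #|L| = (2 ^ (s * m))%N -> (order frob x %| m)%N.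
Proof. by move=> cardL; rewrite (order_dvdn_iter frob_inj) iter_frob -cardL expf_card. Qed.

Lemma order_frob_gt1 x : x \notin subF L s -> (1 < order frob x)%N.
Proof.
by rewrite ltn_neqAle order_gt0 andbT eq_sym -dvdn1 (order_dvdn_iter frob_inj) inE.
Qed.

Lemma horner_frob (P : {poly L}) y :
  (forall i, P`_i \in subF L s) -> P.[frob y] = frob P.[y].
Proof.
move=> P_subF; rewrite !horner_coef (big_morph _ frobD (expr0n _ _)) ?expn_eq0 //.
apply: eq_bigr => i _; rewrite exprMn -!exprM mulnC.
by have := P_subF i; rewrite inE => /eqP->.
Qed.

Lemma double_order_frob_le_cDelta (P : {poly L}) a b x :
  (forall i, P`_i \in subF L s) -> a \in subF L s -> b \in subF L s ->
  a != 0 -> odd (order frob x) -> P.[x + a] + P.[x] = b ->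
  (2 * order frob x <= cDelta (fun y => P.[y]) 1%R a b)%N.
Proof.
move=> P_subF; rewrite !inE => /eqP frob_a /eqP frob_b a0 odd_x Px.
have add_a_frob : {morph +%R^~ a : y / frob y}.
  by move=> y /=; rewrite frobD frob_a.
rewrite /cDelta; apply: (double_order_le_card frob_inj _ _ _ add_a_frob (addIr a)).
- move=> y; rewrite !inE !mul1r !(GRing.subr_pchar2 pchar2_L) => /eqP Py.
  by rewrite -{1}frob_a -frobD !horner_frob // -frobD Py frob_b.
- move=> y; rewrite !inE !mul1r !(GRing.subr_pchar2 pchar2_L) addrK_pchar2 //.
  by rewrite addrC.
- by rewrite inE mul1r (GRing.subr_pchar2 pchar2_L) Px.
have a_involutive := addrK_pchar2 pchar2_L a.
apply: contra a0.
move=> /(fconnect_involution_odd_order frob_inj _ _ add_a_frob a_involutive odd_x) /eqP.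
by rewrite -{2}[x]addr0 (inj_eq (addrI x)).
Qed.

End BinaryFrobenius.

Theorem proposition2p2 (s m k : nat) (L : finFieldType) (P : {poly L}) :
  (0 < s)%N -> (0 < m)%N -> (2 <= k)%N ->
  #|L| = (2 ^ (s * m))%N ->
  (forall i, P`_i \in subF L s) ->
  cdiff_unif (fun x => P.[x]) 1 = (2 * k)%N ->
  (forall t : nat, (2 <= t <= k)%N -> ~~ (t %| m)%N) ->
  forall a b : L, a \in subF L s -> b \in subF L s -> a != 0 ->
  forall x : L, x \notin subF L s -> P.[x + a] + P.[x] != b.
Proof.
move=> _ _ k_ge2 cardL P_subF unifP m_free a b aK bK a0 x xK; apply/eqP => Px.
have pchar2_L : 2%N \in [pchar L] := card_finPcharP cardL isT.
set d := order (fun y : L => y ^+ (2 ^ s)) x.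
have d_m : (d %| m)%N := order_frob_dvdn pchar2_L m x cardL.
have d_gt1 : (1 < d)%N := order_frob_gt1 pchar2_L x xK.
have odd_d : odd d.
  by apply: (dvdn_odd d_m); rewrite -[odd m]negbK -dvdn2 m_free.
have k_lt_d : (k < d)%N.
  by rewrite ltnNge; apply: contraL d_m => d_le_k; apply: m_free; rewrite d_gt1.
have : (2 * d <= 2 * k)%N.
  rewrite -unifP; apply: leq_trans _ (cDelta_le_cdiff_unif _).
    exact: double_order_frob_le_cDelta pchar2_L _ _ _ _ P_subF aK bK a0 odd_d Px.
  by rewrite a0 orbT.
by rewrite leq_pmul2l // leqNgt k_lt_d.
Qed.
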